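(* Let $\mathrm{H}$ be a set of Horn rules, $\mathcal{G}$ a g-sequent, and $\mathbf{G}=\mathbf{G}(\mathrm{H})$. For every string $s$ over $\mathtt{E}\cup\overline{\mathtt{E}}$ and all $u,w\in\mathcal{U}(\mathcal{G})$: if $\mathcal{G}\models w\xrightarrow{s}u$, then for every string $t$ with $t\longrightarrow^{*}_{\mathbf{G}}s$ we have $\overline{\mathrm{H}}(\mathcal{G})\models w\xrightarrow{t}u$.
   Context: Fix a countably infinite set $\mathtt{S}$ of sequents (atomic labels), a set $\mathcal{U}$ of vertices, and a non-empty finite set $\mathtt{E}$ of edge types. A g-sequent is $\mathcal{G}=(\mathcal{V},\mathcal{E},\mathcal{L})$ with $\mathcal{V}\subseteq\mathcal{U}$ finite, $\mathcal{E}=\{\mathcal{E}_a\mid a\in\mathtt{E}\}$, $\mathcal{E}_a\subseteq\mathcal{V}\times\mathcal{V}$, $\mathcal{L}:\mathcal{V}\to\mathtt{S}$; $\mathcal U(\mathcal G)=\mathcal V$; written $\Gamma\vdash\Delta$ with $\Gamma$ the set of edge atoms $w\mathcal{E}_a u$ and $\Delta$ the set of prefixed sequents $w:S$; commas denote disjoint union. Let $\overline{\mathtt E}=\{\bar a\mid a\in\mathtt E\}$, $\bar{\bar z}=z$, $\overline{x_1\cdots x_n}=\bar x_n\cdots\bar x_1$, $\varepsilon$ empty string. Paths: $\mathcal{G}\models u\xrightarrow{a}w$ iff $(u,w)\in\mathcal{E}_a$; $\mathcal{G}\models u\xrightarrow{\bar a}w$ iff $(w,u)\in\mathcal{E}_a$;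 $u\xrightarrow{\varepsilon}w$ iff $u=w$; $u\xrightarrow{xs}w$ iff some $v$ has $u\xrightarrow{x}v$ and $v\xrightarrow{s}w$. For a set $\mathbf G$ of production rules $x\longrightarrow t$ ($x\in\mathtt E\cup\overline{\mathtt E}$), $t\longrightarrow_{\mathbf G}t'$ iff $t'$ arises from $t$ by replacing one occurrence of a left side by the corresponding right side, and $\longrightarrow^*_{\mathbf G}$ is its reflexive-transitive closure. For $s=x_1\cdots x_n$, $w\mathcal{E}_s u$ abbreviates edge atoms $w\mathcal{E}_{x_1}v_1,\dots,v_{n-1}\mathcal{E}_{x_n}u$, with $v\mathcal E_{\bar a}z$ meaning $z\mathcal E_a v$ and $w\mathcal E_\varepsilon u$ meaning $w=u$. A forward Horn rule $h_f$ (for $a\in\mathtt E$, string $s$) has premise $\Gamma,w\mathcal{E}_s u,w\mathcal{E}_a u\vdash\Delta$ and conclusion $\Gamma,w\mathcal{E}_s u\vdash\Delta$; a backward Horn rule $h_b$ is the same with $w\mathcal{E}_a u$ replaced by $u\mathcal{E}_a w$. $\mathbf{G}(h_f)=\{a\longrightarrow s,\bar a\longrightarrow\bar s\}$, $\mathbf{G}(h_b)=\{\bar a\longrightarrow s,a\longrightarrow\bar s\}$, $\mathbf G(\mathrm H)=\bigcup_{h\in\mathrm H}\mathbf G(h)$. Saturation: the inverse $\bar h$ of a Horn rule $h$ turns the conclusion of an instance of $h$ into its premise (i.e. adds the edge atom $w\mathcal E_a u$, resp. $u\mathcal E_a w$, whenever $w\mathcal E_s u$ is present). An application of $\bar h$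 to $\mathcal G$ is permissible iff it produces a g-sequent different from $\mathcal G$. $\overline{\mathrm H}(\mathcal G)$ denotes the g-sequent obtained from $\mathcal G$ by repeatedly performing permissible applications of rules $\bar h$, $h\in\mathrm H$, until none is possible (it is $\overline{\mathrm H}$-saturated: no application of any $\bar h$ changes it). *)

From Stdlib Require List.
From mathcomp Require Import all_boot.
Set Implicit Arguments. Unset Strict Implicit. Unset Printing Implicit Defensive.

Section GSeq.
(* E : finite non-empty set of edge types; U : vertices; S : sequent labels *)
Variables (E : finType) (U S : Type).

(* letters of E ∪ Ē *)
Inductive letter := Fw of E | Bw of E.
Definition lbar (x : letter) : letter :=
  match x with Fw a => Bw a | Bw a => Fw a end.
Definition sbar (s : seq letter) : seq letter := rev (map lbar s).

(* g-sequents: finite vertex set, edges within V, labelling L (meaningful on V) *)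
Record gseq := GSeq {
  gV : U -> Prop;
  gV_fin : exists l : seq U, forall x, gV x -> List.In x l;
  gE : E -> U -> U -> Prop;
  gE_sub : forall a x y, gE a x y -> gV x /\ gV y;
  gL : U -> S }.

Definition lpath (G : gseq) (u : U) (x : letter) (w : U) : Prop :=
  match x with Fw a => gE G a u w | Bw a => gE G a w u end.
Fixpoint spath (G : gseq) (u : U) (s : seq letter) (w : U) : Prop :=
  match s with
  | [::] => u = w
  | x :: s' => exists v, lpath G u x v /\ spath G v s' w
  end.

Record horn := Horn { hfwd : bool; hlab : E; hstr : seq letter }.

Definition prods (h : horn) : seq (letter * seq letter) :=
  if hfwd h then [:: (Fw (hlab h), hstr h); (Bw (hlab h), sbar (hstr h))]
  else [:: (Bw (hlab h), hstr h); (Fw (hlab h), sbar (hstr h))].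

Definition GH (H : horn -> Prop) (p : letter * seq letter) : Prop :=
  exists2 h, H h & List.In p (prods h).

Definition rw1 (P : letter * seq letter -> Prop) (t t' : seq letter) : Prop :=
  exists t1 t2 x r, P (x, r) /\ t = t1 ++ x :: t2 /\ t' = t1 ++ r ++ t2.
Inductive rw_star (P : letter * seq letter -> Prop) : seq letter -> seq letter -> Prop :=
  | rws_refl t : rw_star P t t
  | rws_step t t' t'' : rw1 P t t' -> rw_star P t' t'' -> rw_star P t t''.

(* the edge atom added by the inverse rule \bar h for the instance (w,u):
   w E_a u (forward) resp. u E_a w (backward) *)
Definition added (h : horn) (w u : U) (b : E) (x y : U) : Prop :=
  b = hlab h /\ (if hfwd h then x = w /\ y = u else x = u /\ y = w).

Definition sat_step (H : horn -> Prop) (G G' : gseq) : Prop :=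
  exists h w u, H h /\ gV G w /\ gV G u /\ spath G w (hstr h) u /\
    (* permissible: the result differs from G, i.e. the atom is new *)
    ~ (exists x y, added h w u (hlab h) x y /\ gE G (hlab h) x y) /\
    (forall x, gV G' x <-> gV G x) /\
    (forall x, gV G x -> gL G' x = gL G x) /\
    (forall b x y, gE G' b x y <-> gE G b x y \/ added h w u b x y).

Inductive sat_star (H : horn -> Prop) : gseq -> gseq -> Prop :=
  | sst_refl G : sat_star H G G
  | sst_step G G' G'' : sat_step H G G' -> sat_star H G' G'' -> sat_star H G G''.

(* \bar H-saturated: no application of any \bar h changes G *)
Definition saturated (H : horn -> Prop) (G : gseq) : Prop :=
  forall h w u, H h -> gV G w -> gV G u -> spath G w (hstr h) u ->
    exists x y, added h w u (hlab h) x y /\ gE G (hlab h) x y.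

Definition saturation (H : horn -> Prop) (G G' : gseq) : Prop :=
  sat_star H G G' /\ saturated H G'.

End GSeq.

From mathcomp Require Import all_boot.

(* Saturation only adds edges, so every path of G is a path of
   the saturation G'.  It therefore suffices to show that paths of a
   saturated g-sequent are closed under *reverse* rewriting: if G' |= w -s-> u
   and t -->_G(H) s in one step, i.e. t = t1 x t2 and s = t1 r t2 with x --> r
   a production of some h in H, then the r-segment v -r-> v' of the path
   witnesses an instance of h (when x is the label letter of h) or of h read
   backwards (when x is its converse, since -sbar r-> is -r-> reversed);
   saturation then provides the edge v -x-> v'. *)

Section Paths.
Context {E : finType} {U S : Type}.
Implicit Types (G : gseq E U S) (s : seq (letter E)).

Lemma spath_cat G v s1 s2 v' :
  spath G v (s1 ++ s2) v' <-> exists m, spath G v s1 m /\ spath G m s2 v'.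
Proof.
elim: s1 v => [|x s1 IH] v /=.
  by split; [move=> h; exists v | move=> [m [-> h]]].
split.
  move=> [m1 [h1 /IH [m [hm1 hm2]]]].
  by exists m; split => //; exists m1.
move=> [m [[m1 [h1 h2]] h3]]; exists m1; split => //.
by apply/IH; exists m.
Qed.

Lemma lpath_bar G v x v' : lpath G v (lbar x) v' <-> lpath G v' x v.
Proof. by case: x. Qed.

Lemma spath_bar G s v v' : spath G v (sbar s) v' <-> spath G v' s v.
Proof.
elim: s v v' => [|x s IH] v v' /=; first by rewrite /sbar /=; split => ->.
rewrite /sbar /= rev_cons -cats1.
split.
  move/spath_cat=> [m [h1 /= [m2 [h2 <-]]]].
  by exists m; split; [apply/lpath_bar | apply/IH].
move=> [m [h1 h2]]; apply/spath_cat; exists m; split; first by apply/IH.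
by exists v'; split => //; apply/lpath_bar.
Qed.

Lemma spath_V {G s v v'} : gV G v -> spath G v s v' -> gV G v'.
Proof.
elim: s v => [|x s IH] v /=; first by move=> h <-.
move=> _ [m [h1 h2]]; apply: (IH m) h2.
by case: x h1 => a /= hxy; case: (gE_sub hxy).
Qed.

Lemma spath_mono G G' :
  (forall a x y, gE G a x y -> gE G' a x y) ->
  forall s v v', spath G v s v' -> spath G' v s v'.
Proof.
move=> hE; elim=> [|x s IH] v v' //= [m [h1 h2]]; exists m; split; last exact: IH.
by case: x h1 => a /= /hE.
Qed.

End Paths.

Section Saturation.
Context {E : finType} {U S : Type} {H : horn E -> Prop}.
Implicit Types (G : gseq E U S).

Lemma sat_star_mono {G G'} : sat_star H G G' ->
  (forall x, gV G x -> gV G' x) /\ (forall a x y, gE G a x y -> gE G' a x y).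
Proof.
elim=> [G0|G0 G1 G2 step _ [IHV IHE]]; first by split.
case: step => h [w [u [_ [_ [_ [_ [_ [hV [_ hE]]]]]]]]].
split; first by move=> x /hV/IHV.
by move=> a x y hx; apply/IHE/hE; left.
Qed.

Definition hletter (h : horn E) : letter E :=
  if hfwd h then Fw (hlab h) else Bw (hlab h).

Lemma prodsE h : prods h = [:: (hletter h, hstr h); (lbar (hletter h), sbar (hstr h))].
Proof. by rewrite /prods /hletter; case: (hfwd h). Qed.

Lemma saturated_instance {G h v v'} : saturated H G -> H h ->
  gV G v -> gV G v' -> spath G v (hstr h) v' -> lpath G v (hletter h) v'.
Proof.
move=> hsat hH hv hv' hp.
have [x [y [[_ hadd] hxy]]] := hsat h v v' hH hv hv' hp.
by move: hadd; rewrite /hletter; case: (hfwd h) => -[? ?]; subst.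
Qed.

Lemma saturated_production {G x r v v'} : saturated H G -> GH H (x, r) ->
  gV G v -> gV G v' -> spath G v r v' -> lpath G v x v'.
Proof.
move=> hsat [h hH]; rewrite prodsE => -[[<- <-]|[[<- <-]|[]]] hv hv' hp.
  exact: saturated_instance.
by apply/lpath_bar/saturated_instance => //; apply/spath_bar.
Qed.

Lemma saturated_rw_star {G t s w u} : saturated H G -> rw_star (GH H) t s ->
  gV G w -> spath G w s u -> spath G w t u.
Proof.
move=> hsat; elim=> // t0 t1 t2 [t3 [t4 [x [r [hP [-> ->]]]]]] _ IH hw hp.
have /spath_cat [m1 [h1 /spath_cat [m2 [h2 h3]]]] := IH hw hp.
have hm1 := spath_V hw h1; have hm2 := spath_V hm1 h2.
apply/spath_cat; exists m1; split => //=; exists m2; split => //.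
exact: saturated_production hsat hP hm1 hm2 h2.
Qed.

End Saturation.

Theorem mainTheorem6 (E : finType) (U S : Type)
  (hE : 0 < #|E|) (hS : exists f : nat -> S, bijective f)
  (H : horn E -> Prop) (G : gseq E U S) (s : seq (letter E)) (u w : U) :
  gV G u -> gV G w -> spath G w s u ->
  forall t : seq (letter E), rw_star (GH H) t s ->
  forall G' : gseq E U S, saturation H G G' -> spath G' w t u.
Proof.
move=> _ hw hp t hrw G' [hst hsat].
have [hV hEd] := sat_star_mono hst.
apply: saturated_rw_star hsat hrw (hV _ hw) _.
exact: spath_mono hEd _ _ _ hp.
Qed.
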